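(* Let $X$ be a real Banach space and let $M\subset X\times X^*$ be a linear subspace (a linear point-to-set operator $M:X\rightrightarrows X^*$). Then: (1) if $M$ is skew, then $M$ is maximal self-cancelling; (2) if $M$ is maximal self-cancelling and $D(M)$ is closed, then $M$ is skew; (3) if $M$ is maximal self-cancelling, $R(M)$ is closed and $X$ is reflexive, then $M$ is skew.
   Context: $\langle x,x^*\rangle=x^*(x)$. For $B\subset X\times X^*$, $B^\vdash=\{(y,y^* )\mid \langle x,y^*\rangle+\langle y,x^*\rangle=0\ \forall (x,x^* )\in B\}$ and $-B=\{(x,-x^* )\mid (x,x^* )\in B\}$. The adjoint of a linear $M$ is $M^*=(-M)^\vdash$, and $M$ is skew if $M=-M^*$ (equivalently $M=M^\vdash$). $M$ is self-cancelling if it is a linear subspace with $\langle x,x^*\rangle=0$ for all $(x,x^* )\in M$, and maximal self-cancelling if it is self-cancelling and not properly contained in any self-cancelling subset of $X\times X^*$. $D(M)=\{x\mid \exists x^*,\ (x,x^* )\in M\}$ and $R(M)=\{x^*\mid \exists x,\ (x,x^* )\in M\}$. *)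

From HB Require Import structures.
From mathcomp Require Import all_boot all_order all_algebra.
From mathcomp Require Import all_classical all_reals all_analysis.
Set Implicit Arguments. Unset Strict Implicit. Unset Printing Implicit Defensive.
Import Order.TTheory GRing.Theory Num.Theory.
Import numFieldNormedType.Exports.
Local Open Scope classical_set_scope.
Local Open Scope ring_scope.

Section Defs.
Variables (R : realType) (X : normedModType R).

(* X^* : bounded (= continuous) linear functionals X -> R, represented as
   functions X -> R satisfying the predicate [is_dual]. *)
Definition is_linear_fun (f : X -> R) : Prop :=
  forall (a b : R) (x y : X), f (a *: x + b *: y) = a * f x + b * f y.

Definition is_dual (f : X -> R) : Prop :=
  is_linear_fun f /\ exists C : R, forall x : X, `|f x| <= C * `|x|.

Definition in_XXs (B : set (X * (X -> R))) : Prop :=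
  forall p, B p -> is_dual p.2.

Definition pair_ (x : X) (xs : X -> R) : R := xs x.

Definition perp (B : set (X * (X -> R))) : set (X * (X -> R)) :=
  [set q | is_dual q.2 /\
     forall p, B p -> pair_ p.1 q.2 + pair_ q.1 p.2 = 0].

Definition negB (B : set (X * (X -> R))) : set (X * (X -> R)) :=
  [set q | exists p, B p /\ q = (p.1, fun x => - p.2 x)].

Definition adjoint (M : set (X * (X -> R))) := perp (negB M).

Definition skew_op (M : set (X * (X -> R))) : Prop := M = negB (adjoint M).

Definition is_subspace (M : set (X * (X -> R))) : Prop :=
  M (0, fun _ => 0) /\
  forall (a b : R) p q, M p -> M q ->
    M (a *: p.1 + b *: q.1, fun x => a * p.2 x + b * q.2 x).

Definition self_cancelling (M : set (X * (X -> R))) : Prop :=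
  in_XXs M /\ is_subspace M /\ forall p, M p -> pair_ p.1 p.2 = 0.

Definition max_self_cancelling (M : set (X * (X -> R))) : Prop :=
  self_cancelling M /\
  forall N : set (X * (X -> R)),
    in_XXs N -> self_cancelling N -> M `<=` N -> N = M.

Definition dom_op (M : set (X * (X -> R))) : set X :=
  [set x | exists xs, M (x, xs)].
Definition ran_op (M : set (X * (X -> R))) : set (X -> R) :=
  [set xs | exists x, M (x, xs)].

(* closedness in X^* for the dual norm ||f|| = sup_{||x||<=1} |f x| *)
Definition dual_closed (S : set (X -> R)) : Prop :=
  forall f, is_dual f ->
    (forall eps : R, 0 < eps -> exists g, S g /\
       forall x : X, `|x| <= 1 -> `|f x - g x| <= eps) -> S f.

(* X^** : linear functionals on X^* bounded for the dual norm;
   reflexive: the canonical embedding X -> X^** is onto. *)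
Definition is_bidual (phi : (X -> R) -> R) : Prop :=
  (forall (a b : R) f g, is_dual f -> is_dual g ->
     phi (fun x => a * f x + b * g x) = a * phi f + b * phi g) /\
  exists C : R, forall f, is_dual f ->
     (forall x : X, `|x| <= 1 -> `|f x| <= 1) -> `|phi f| <= C.

Definition reflexive_space : Prop :=
  forall phi, is_bidual phi -> exists x : X, forall f, is_dual f -> phi f = f x.

End Defs.

(* Write M^|- for [perp M].  A self-cancelling subspace M always satisfies
   M `<=` M^|-, and M is skew exactly when M = M^|-.  If M is skew, every
   self-cancelling N containing M lies in M^|- = M, so M is maximal.
   Conversely, if M is maximal self-cancelling and q in M^|- cancels itself,
   then M + Rq is still self-cancelling, so q lies in M; this applies to
   q - p for any p in M sharing the point q.1 (resp. the functional q.2), so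
   it suffices that q.1 lies in D(M) (resp. q.2 in R(M)).  If D(M) is closed
   and q.1 is not in it, Hahn-Banach gives x^* vanishing on D(M) with
   x^*(q.1) = 1; then (0, x^* ) is a self-cancelling element of M^|-, hence of
   M, which q does not annihilate.  For R(M) one separates in X^* with the
   dual norm and uses reflexivity to realize the separating functional of
   X^** by a point x0 of X, using (x0, 0) instead. *)

From HB Require Import structures.
From mathcomp Require Import all_boot all_order all_algebra.
From mathcomp Require Import all_classical all_reals all_analysis.
From mathcomp Require Import ring lra.
Set Implicit Arguments. Unset Strict Implicit. Unset Printing Implicit Defensive.
Import Order.TTheory GRing.Theory Num.Theory.
Import numFieldNormedType.Exports.
Local Open Scope classical_set_scope.
Local Open Scope ring_scope.

(** * Hahn-Banach extension and separation *)

Section HahnBanach.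
Variables (R : realType) (V : lmodType R) (S : set V) (p : V -> R).
Hypothesis S0 : S 0.
Hypothesis S_comb : forall a b {u v}, S u -> S v -> S (a *: u + b *: v).
Hypothesis p_subadd : forall {u v}, S u -> S v -> p (u + v) <= p u + p v.
Hypothesis p_posZ : forall t {u}, 0 < t -> S u -> p (t *: u) = t * p u.

Lemma S_add u v : S u -> S v -> S (u + v).
Proof. by move=> Su Sv; have := S_comb 1 1 Su Sv; rewrite !scale1r. Qed.

Lemma S_scale t u : S u -> S (t *: u).
Proof. by move=> Su; have := S_comb t 0 Su S0; rewrite scaler0 addr0. Qed.

Lemma S_sub u v : S u -> S v -> S (u - v).
Proof. by move=> Su Sv; have := S_comb 1 (-1) Su Sv; rewrite scale1r scaleN1r. Qed.

Definition dominated_graph (G : set (V * R)) : Prop :=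
  [/\ forall v a b, G (v, a) -> G (v, b) -> a = b,
      forall a b u x v y, G (u, x) -> G (v, y) -> G (a *: u + b *: v, a * x + b * y),
      forall v a, G (v, a) -> S v &
      forall v a, G (v, a) -> a <= p v].

Definition line_extension (G : set (V * R)) (z : V) (c : R) : set (V * R) :=
  [set q | exists e a t, G (e, a) /\ q = (e + t *: z, a + t * c)].

Lemma line_extension_sub G z c : G `<=` line_extension G z c.
Proof.
move=> [e a] Gea; exists e, a, 0; split => //.
by rewrite scale0r addr0 mul0r addr0.
Qed.

(* Any [c] between [sup (a - p (e - z))] and [inf (p (e' + z) - a')] works,
   and the sup is below the inf by subadditivity of [p]. *)
Lemma extension_bound G z : dominated_graph G -> G (0, 0) -> S z ->
  exists c, (forall e a, G (e, a) -> a - p (e - z) <= c) /\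
            (forall e a, G (e, a) -> c <= p (e + z) - a).
Proof.
move=> [_ Glin GS Gp] G00 Sz.
have sep e a e' a' : G (e, a) -> G (e', a') -> a - p (e - z) <= p (e' + z) - a'.
  move=> Gea Gea'; have := Gp _ _ (Glin 1 1 _ _ _ _ Gea Gea').
  rewrite !scale1r !mul1r.
  have -> : e + e' = (e - z) + (e' + z) by rewrite addrACA addNr addr0.
  have := p_subadd (S_sub (GS _ _ Gea) Sz) (S_add (GS _ _ Gea') Sz); lra.
pose E := [set r | exists e a, G (e, a) /\ r = a - p (e - z)].
have E0 : E !=set0 by exists (0 - p (0 - z)), 0, 0.
have ubE : has_ubound E.
  by exists (p (0 + z) - 0) => r [e [a [Gea ->]]]; exact: sep Gea G00.
exists (sup E); split => [e a Gea|e a Gea].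
  by apply: ub_le_sup => //; exists e, a.
by apply: ge_sup => // r [e' [a' [Gea' ->]]]; exact: sep Gea' Gea.
Qed.

Lemma line_extension_dominated G z c : dominated_graph G -> S z ->
  (forall a, ~ G (z, a)) ->
  (forall e a, G (e, a) -> a - p (e - z) <= c) ->
  (forall e a, G (e, a) -> c <= p (e + z) - a) ->
  dominated_graph (line_extension G z c).
Proof.
move=> [Gfun Glin GS Gp] Sz Gz c_ge c_le; split.
- move=> v a b [e [x [t [Gex [-> ->]]]]] [e' [x' [t' [Gex' [Hv ->]]]]].
  have [tt'|tt'] := eqVneq t t'.
    subst t'.
    have ee' : e = e' by move: Hv => /addIr.
    by subst e'; rewrite (Gfun _ _ _ Gex Gex').
  have dt0 : t - t' != 0 by rewrite subr_eq0.
  have dee : e' - e = (t - t') *: z.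
    have -> : e' = e + t *: z - t' *: z by rewrite Hv addrK.
    by rewrite scalerBl addrAC [e + _]addrC addrK.
  have := Glin (t - t')^-1 (- (t - t')^-1) _ _ _ _ Gex' Gex.
  rewrite scaleNr -scalerBr dee scalerA mulVf // scale1r.
  by move=> /Gz.
- move=> a b u x v y [e1 [x1 [t1 [G1 [-> ->]]]]] [e2 [x2 [t2 [G2 [-> ->]]]]].
  exists (a *: e1 + b *: e2), (a * x1 + b * x2), (a * t1 + b * t2).
  split; first exact: Glin.
  congr pair; last by ring.
  by rewrite !scalerDr !scalerA scalerDl addrACA.
- move=> v a [e [x [t [Gex [-> _]]]]].
  by apply: S_add; [exact: GS Gex|exact: S_scale].
- move=> v a [e [x [t [Gex [-> ->]]]]].
  have Se := GS _ _ Gex.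
  (* rescale to [t = 1] or [t = -1], where the bounds on [c] apply *)
  have [t_lt0|t_gt0|->] := ltgtP t 0; last first.
  + by rewrite scale0r addr0 mul0r addr0; exact: Gp Gex.
  + have t0 : t != 0 by rewrite gt_eqF.
    have := Glin t^-1 0 _ _ _ _ Gex Gex.
    rewrite scale0r addr0 mul0r addr0 => /c_le /(ler_wpM2l (ltW t_gt0)).
    rewrite mulrBr mulrA mulfV // mul1r -p_posZ //; last exact/S_add/Sz/S_scale.
    by rewrite scalerDr scalerA mulfV // scale1r; lra.
  + have t0 : - t != 0 by rewrite oppr_eq0 lt_eqF.
    have nt_gt0 : 0 < - t by rewrite oppr_gt0.
    have := Glin (- t)^-1 0 _ _ _ _ Gex Gex.
    rewrite scale0r addr0 mul0r addr0 => /c_ge /(ler_wpM2l (ltW nt_gt0)).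
    rewrite mulrBr mulrA mulfV // mul1r -p_posZ //; last exact/S_sub/Sz/S_scale.
    by rewrite scalerBr scalerA mulfV // scale1r scaleNr opprK; lra.
Qed.

Lemma dominated_graph_bigcup (F : set (set (V * R))) :
  F `<=` dominated_graph -> total_on F subset ->
  dominated_graph (\bigcup_(G in F) G).
Proof.
move=> Fdom Ftot; split.
- move=> v a b [G1 F1 G1a] [G2 F2 G2b].
  have [fun1 _ _ _] := Fdom _ F1; have [fun2 _ _ _] := Fdom _ F2.
  by case: (Ftot _ _ F1 F2) => sub; [exact: fun2 (sub _ G1a) G2b|exact: fun1 G1a (sub _ G2b)].
- move=> a b u x v y [G1 F1 G1u] [G2 F2 G2v].
  have [_ lin1 _ _] := Fdom _ F1; have [_ lin2 _ _] := Fdom _ F2.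
  case: (Ftot _ _ F1 F2) => sub.
    by exists G2 => //; apply: lin2 => //; exact: sub.
  by exists G1 => //; apply: lin1 => //; exact: sub.
- by move=> v a [G FG Gva]; have [_ _ GS _] := Fdom _ FG; exact: GS Gva.
- by move=> v a [G FG Gva]; have [_ _ _ Gp] := Fdom _ FG; exact: Gp Gva.
Qed.

Lemma dominated_graph_maximal_total A z : dominated_graph A -> A (0, 0) ->
  (forall B, A `<` B -> ~ dominated_graph B) -> S z -> exists a, A (z, a).
Proof.
move=> Adom A00 Amax Sz; apply: contrapT => Az.
have {}Az a : ~ A (z, a) by move=> Aza; apply: Az; exists a.
have [c [c_ge c_le]] := extension_bound Adom A00 Sz.
apply: (Amax (line_extension A z c)); last exact: line_extension_dominated.
split; first exact: line_extension_sub.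
move=> /(_ (z, c)) sub; apply: (Az c); apply: sub; exists 0, 0, 1.
by rewrite scale1r add0r mul1r add0r.
Qed.

Theorem hahn_banach (G0 : set (V * R)) : dominated_graph G0 -> G0 (0, 0) ->
  exists g : V -> R, (forall v a, G0 (v, a) -> g v = a) /\
    (forall a b u v, S u -> S v -> g (a *: u + b *: v) = a * g u + b * g v) /\
    (forall u, S u -> g u <= p u).
Proof.
move=> G0dom G00.
(* the empty graph is admitted because it is the union of the empty chain *)
pose P := [set G | dominated_graph G /\ (G = set0 \/ G0 `<=` G)].
have [|A [[Adom [A0|G0A]] Amax]] := @Zorn_bigcup _ P.
- move=> F FP Ftot; split; first by apply: dominated_graph_bigcup => // G /FP [].
  have [[G FG [q Gq]]|Fempty] := pselect (exists2 G, F G & G !=set0).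
    have [_ [G0e|G0G]] := FP _ FG; first by rewrite G0e in Gq.
    by right => q' /G0G G'q; exists G.
  left; apply/seteqP; split => // q [G FG Gq]; apply: Fempty.
  by exists G => //; exists q.
- exfalso; apply: (Amax G0); last by split; last right.
  by rewrite A0; split => // /(_ _ G00).
have Amax' B : A `<` B -> ~ dominated_graph B.
  by move=> AB Bdom; apply: (Amax B AB); split; last by right => q /G0A /(proj1 AB).
have [Afun Alin _ Ap] := Adom.
pose g v := xget 0 [set a | A (v, a)].
have gA v : S v -> A (v, g v).
  by move=> Sv; exact: (xgetPex 0 (dominated_graph_maximal_total Adom (G0A _ G00) Amax' Sv)).
exists g; split; [|split].
- move=> v a G0va; have [_ _ G0S _] := G0dom.
  exact: Afun (gA v (G0S _ _ G0va)) (G0A _ G0va).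
- move=> a b u v Su Sv.
  exact: Afun (gA _ (S_comb a b Su Sv)) (Alin a b _ _ _ _ (gA u Su) (gA v Sv)).
- by move=> u Su; exact: Ap (gA u Su).
Qed.

Lemma hahn_banach_separation (D : set V) (y : V) :
  D 0 -> (forall a b u v, D u -> D v -> D (a *: u + b *: v)) -> D `<=` S ->
  S y -> ~ D y -> (forall d t, D d -> t <= p (d + t *: y)) ->
  exists g : V -> R, g y = 1 /\ (forall d, D d -> g d = 0) /\
    (forall a b u v, S u -> S v -> g (a *: u + b *: v) = a * g u + b * g v) /\
    (forall u, S u -> g u <= p u).
Proof.
move=> D0 Dcomb DS Sy Dy Dp.
pose G : set (V * R) := [set (d, 0) | d in D].
have Gdom : dominated_graph G.
  split.
  - by move=> v a b [d _ [_ <-]] [d' _ [_ <-]].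
  - move=> a b u x v z [d Dd [<- <-]] [d' Dd' [<- <-]].
    by exists (a *: d + b *: d'); [exact: Dcomb|rewrite !mulr0 addr0].
  - by move=> v a [d Dd [<- _]]; exact: DS.
  - by move=> v a [d Dd [<- <-]]; have := Dp d 0 Dd; rewrite scale0r addr0.
have G0dom : dominated_graph (line_extension G y 1).
  apply: line_extension_dominated => //.
  - by move=> a [d Dd [dy _]]; apply: Dy; rewrite -dy.
  - by move=> e a [d Dd [<- <-]]; have := Dp d (-1) Dd; rewrite scaleN1r; lra.
  - by move=> e a [d Dd [<- <-]]; have := Dp d 1 Dd; rewrite scale1r; lra.
have G0y : line_extension G y 1 (y, 1).
  by exists 0, 0, 1; rewrite scale1r add0r mul1r add0r; split => //; exists 0.
have G0D d : D d -> line_extension G y 1 (d, 0).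
  by move=> Dd; apply: line_extension_sub; exists d.
have [g [gG0 [glin gp]]] := hahn_banach G0dom (G0D _ D0).
by exists g; split; [exact: gG0 G0y|split => // d /G0D /gG0].
Qed.

End HahnBanach.

Section GapSeparation.
Variables (R : realType) (V : lmodType R) (S : set V) (N : V -> R).
Hypothesis S0 : S 0.
Hypothesis S_comb : forall a b {u v}, S u -> S v -> S (a *: u + b *: v).
Hypothesis N_ge0 : forall u, S u -> 0 <= N u.
Hypothesis N_subadd : forall {u v}, S u -> S v -> N (u + v) <= N u + N v.
Hypothesis NZ : forall t {u}, S u -> N (t *: u) = `|t| * N u.

Lemma gap_separation (D : set V) (y : V) (e : R) :
  D 0 -> (forall a b u v, D u -> D v -> D (a *: u + b *: v)) -> D `<=` S ->
  S y -> 0 < e -> (forall d, D d -> e <= N (y - d)) ->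
  exists g : V -> R, g y = 1 /\ (forall d, D d -> g d = 0) /\
    (forall a b u v, S u -> S v -> g (a *: u + b *: v) = a * g u + b * g v) /\
    (forall u, S u -> `|g u| <= e^-1 * N u).
Proof.
move=> D0 Dcomb DS Sy e_gt0 gap.
have einv_ge0 : 0 <= e^-1 by rewrite invr_ge0 ltW.
have p_subadd u v : S u -> S v -> e^-1 * N (u + v) <= e^-1 * N u + e^-1 * N v.
  by move=> Su Sv; rewrite -mulrDr ler_wpM2l // N_subadd.
have p_posZ t u : 0 < t -> S u -> e^-1 * N (t *: u) = t * (e^-1 * N u).
  by move=> t_gt0 Su; rewrite NZ // gtr0_norm // mulrCA.
have Dy : ~ D y.
  have N0 : N 0 = 0 by rewrite -(scale0r (0 : V)) NZ // normr0 mul0r.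
  by move=> /gap; rewrite subrr N0; lra.
have Dp d t : D d -> t <= e^-1 * N (d + t *: y).
  move=> Dd; have [->|t0] := eqVneq t 0.
    by rewrite scale0r addr0 mulr_ge0 //; exact/N_ge0/DS.
  have Dd' : D (- t^-1 *: d) by have := Dcomb (- t^-1) 0 _ _ Dd D0; rewrite scaler0 addr0.
  have := gap _ Dd'; rewrite scaleNr opprK => gap_t.
  have -> : d + t *: y = t *: (y + t^-1 *: d).
    by rewrite scalerDr scalerA mulfV // scale1r addrC.
  rewrite NZ; last by have := S_comb 1 t^-1 Sy (DS _ Dd); rewrite scale1r.
  apply: (le_trans (ler_norm t)); rewrite mulrCA -{1}[`|t|]mulr1 ler_wpM2l //.
  by rewrite -(ler_pM2l e_gt0) mulrA mulfV ?gt_eqF // mul1r mulr1.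
have [g [g1 [gD [glin gp]]]] :=
  hahn_banach_separation S0 S_comb p_subadd p_posZ D0 Dcomb DS Sy Dy Dp.
exists g; do 3!split => //.
move=> u Su; rewrite ler_norml gp // andbT lerNl.
have := gp _ (S_comb (-1) 0 Su Su); rewrite glin //.
by rewrite scale0r addr0 NZ // normrN normr1 mul1r mul0r addr0 mulN1r.
Qed.

End GapSeparation.

(** * The dual space *)

Section Duality.
Variables (R : realType) (X : normedModType R).

Lemma dual_lin (f : X -> R) : is_dual f ->
  forall a b x y, f (a *: x + b *: y) = a * f x + b * f y.
Proof. by case. Qed.

Lemma dual0 (f : X -> R) : is_dual f -> f 0 = 0.
Proof. by move=> /dual_lin/(_ 0 0 0 0); rewrite !scale0r !mul0r addr0 add0r. Qed.

Lemma dual_comb (f g : X -> R) a b : is_dual f -> is_dual g ->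
  is_dual (fun x => a * f x + b * g x).
Proof.
move=> [lf [C1 hC1]] [lg [C2 hC2]]; split.
  by move=> s t x y /=; rewrite lf lg; ring.
exists (`|a| * C1 + `|b| * C2) => x.
apply: (le_trans (ler_normD _ _)); rewrite !normrM mulrDl -!mulrA.
by apply: lerD; apply: ler_wpM2l.
Qed.

Lemma dual_cst0 : is_dual (fun _ : X => 0 : R).
Proof. by split; [move=> a b x y; ring|exists 0 => x; rewrite normr0 mul0r]. Qed.

Lemma dual_scale (f : X -> R) t : is_dual f -> is_dual (fun x => t * f x).
Proof.
move=> df; have := dual_comb t 0 df df.
by congr is_dual; apply/funext => x; rewrite mul0r addr0.
Qed.

Lemma dual_opp (f : X -> R) : is_dual f -> is_dual (fun x => - f x).
Proof.
by move=> /(dual_scale (-1)); congr is_dual; apply/funext => x; rewrite mulN1r.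
Qed.

Lemma dual_sub (f g : X -> R) : is_dual f -> is_dual g -> is_dual (fun x => f x - g x).
Proof.
move=> df dg; have := dual_comb 1 (-1) df dg.
by congr is_dual; apply/funext => x; rewrite mul1r mulN1r.
Qed.

Definition dual_norm (f : X -> R) : R :=
  sup [set r | exists2 x : X, `|x| <= 1 & r = `|f x|].

Lemma dual_norm_ub (f : X -> R) x : is_dual f -> `|x| <= 1 -> `|f x| <= dual_norm f.
Proof.
move=> [_ [C hC]] x1; apply: ub_le_sup; last by exists x.
exists `|C| => _ [z z1 ->]; apply: (le_trans (hC z)).
apply: (le_trans (ler_wpM2r (normr_ge0 z) (ler_norm C))).
by rewrite -[leRHS]mulr1 ler_wpM2l.
Qed.

Lemma dual_norm_le (f : X -> R) c :
  (forall x, `|x| <= 1 -> `|f x| <= c) -> dual_norm f <= c.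
Proof.
move=> f_le; apply: ge_sup; first by exists `|f 0|, 0; rewrite ?normr0.
by move=> _ [x x1 ->]; exact: f_le.
Qed.

Lemma dual_norm_ge0 (f : X -> R) : is_dual f -> 0 <= dual_norm f.
Proof. by move=> df; apply: le_trans (dual_norm_ub (x := 0) df _); rewrite ?normr0. Qed.

Lemma dual_normD (f g : X -> R) : is_dual f -> is_dual g ->
  dual_norm (f + g) <= dual_norm f + dual_norm g.
Proof.
move=> df dg; apply: dual_norm_le => x x1 /=.
by apply: (le_trans (ler_normD _ _)); apply: lerD; exact: dual_norm_ub.
Qed.

Lemma dual_normZ t (f : X -> R) : is_dual f -> dual_norm (t *: f) = `|t| * dual_norm f.
Proof.
have normZ_le s h : is_dual h -> dual_norm (s *: h) <= `|s| * dual_norm h.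
  move=> dh; apply: dual_norm_le => x x1.
  by rewrite /= normrM ler_wpM2l // dual_norm_ub.
move=> df; apply/eqP; rewrite eq_le normZ_le //=.
have [->|t0] := eqVneq t 0; first by rewrite normr0 mul0r dual_norm_ge0 //; exact: dual_scale.
rewrite -ler_pdivlMl ?normr_gt0 // -normrV ?unitfE //.
by rewrite -{1}[f](scalerK t0) normZ_le //; exact: dual_scale.
Qed.

Lemma closed_norm_gap (D : set X) (y : X) : closed D -> ~ D y ->
  exists2 e : R, 0 < e & forall d, D d -> e <= `|y - d|.
Proof.
move=> Dcl Dy; apply: contrapT => nogap; apply/Dy/Dcl => B.
rewrite -nbhs_nbhs_norm => -[r /= r_gt0 rB].
apply: contrapT => DB; apply: nogap; exists r => // d Dd.
by rewrite leNgt; apply/negP => yd; apply: DB; exists d; split => //; exact: rB.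
Qed.

Lemma dual_closed_gap (T : set (X -> R)) (f : X -> R) : T `<=` is_dual (X:=X) ->
  dual_closed T -> is_dual f -> ~ T f ->
  exists2 e : R, 0 < e & forall g, T g -> e <= dual_norm (f - g).
Proof.
move=> T_dual Tcl df Tf; apply: contrapT => nogap; apply/Tf/Tcl => // eps eps_gt0.
apply: contrapT => far; apply: nogap; exists eps => // g Tg.
rewrite leNgt; apply/negP => close; apply: far; exists g; split => // x x1.
apply: le_trans (ltW close).
by apply: (dual_norm_ub (f := f - g)) => //; exact: dual_sub (T_dual _ Tg).
Qed.

(** * Self-cancelling subspaces *)

Lemma self_cancelling_sub_perp (N : set (X * (X -> R))) :
  self_cancelling N -> N `<=` perp N.
Proof.
move=> [NXs [[_ Ncomb] Nsc]] q Nq; split; first exact: NXs.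
move=> p Np; have := Nsc _ (Ncomb 1 1 p q Np Nq); rewrite /pair_ /=.
rewrite (dual_lin (NXs _ Np)) (dual_lin (NXs _ Nq)).
have := Nsc _ Np; have := Nsc _ Nq; rewrite /pair_; lra.
Qed.

Lemma negB_adjoint (M : set (X * (X -> R))) : negB (adjoint M) = perp M.
Proof.
apply/seteqP; split.
- move=> _ [r [[dr r_perp] ->]]; split; first exact: dual_opp.
  move=> p Mp; have := r_perp (p.1, fun x => - p.2 x).
  by rewrite /pair_ /= => /(_ (ex_intro _ p (conj Mp erefl))); lra.
- move=> [q1 q2] [dq q_perp]; exists (q1, fun x => - q2 x); split.
    split; first exact: dual_opp.
    by move=> _ [p [Mp ->]]; have := q_perp p Mp; rewrite /pair_ /=; lra.
  by congr pair; apply/funext => x /=; rewrite opprK.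
Qed.

Lemma skew_max_self_cancelling (M : set (X * (X -> R))) :
  in_XXs M -> is_subspace M -> skew_op M -> max_self_cancelling M.
Proof.
rewrite /skew_op negB_adjoint => MXs Msub Mperp.
have Msc p : M p -> pair_ p.1 p.2 = 0.
  move=> Mp; have [_ /(_ p Mp)] : perp M p by rewrite -Mperp.
  rewrite /pair_; lra.
split; first by split.
move=> N NXs Nsc MN; apply/seteqP; split => [q Nq|]; last exact: MN.
rewrite Mperp; split; first exact: NXs.
by move=> p Mp; have := self_cancelling_sub_perp Nsc (MN _ Mp); case=> _ /(_ q Nq); lra.
Qed.

Lemma perp_sub_skew (M : set (X * (X -> R))) :
  max_self_cancelling M -> perp M `<=` M -> skew_op M.
Proof.
move=> [Msc _] perpM; rewrite /skew_op negB_adjoint.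
by apply/seteqP; split; [exact: self_cancelling_sub_perp|].
Qed.

Definition add_line (M : set (X * (X -> R))) (q : X * (X -> R)) :=
  [set r | exists p t, M p /\ r = (p.1 + t *: q.1, fun x => p.2 x + t * q.2 x)].

Lemma add_line_self_cancelling (M : set (X * (X -> R))) q :
  self_cancelling M -> perp M q -> pair_ q.1 q.2 = 0 -> self_cancelling (add_line M q).
Proof.
move=> [MXs [[M0 Mcomb] Msc]] [dq q_perp] qq; split; [|split; [split|]].
- move=> _ [p [t [Mp ->]]] /=.
  have := dual_comb 1 t (MXs _ Mp) dq.
  by congr is_dual; apply/funext => x; rewrite mul1r.
- exists (0, fun _ => 0), 0; split => //; congr pair; first by rewrite scale0r addr0.
  by apply/funext => x; rewrite mul0r addr0.
- move=> a b _ _ [p1 [t1 [M1 ->]]] [p2 [t2 [M2 ->]]] /=.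
  exists (a *: p1.1 + b *: p2.1, fun x => a * p1.2 x + b * p2.2 x), (a * t1 + b * t2).
  split; first exact: Mcomb.
  congr pair; last by apply/funext => x /=; ring.
  by rewrite /= !scalerDr !scalerA scalerDl addrACA.
- move=> _ [p [t [Mp ->]]]; move: qq; rewrite /pair_ /= -[p.1]scale1r => qq.
  have pp := Msc _ Mp; have pq := q_perp _ Mp; rewrite /pair_ /= in pp pq.
  rewrite (dual_lin (MXs _ Mp)) (dual_lin dq) qq pp.
  have -> : q.2 p.1 = - p.2 q.1 by lra.
  ring.
Qed.

Lemma max_self_cancelling_perp_mem (M : set (X * (X -> R))) q :
  max_self_cancelling M -> perp M q -> pair_ q.1 q.2 = 0 -> M q.
Proof.
move=> [Msc Mmax] q_perp qq.
have Lsc := add_line_self_cancelling Msc q_perp qq.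
have [_ [[M0 _] _]] := Msc.
rewrite -(Mmax (add_line M q) Lsc.1 Lsc).
  exists (0, fun _ => 0), 1; split => //; case: q {q_perp qq Lsc} => q1 q2.
  by congr pair; [rewrite /= scale1r add0r|apply/funext => x /=; rewrite mul1r add0r].
move=> p Mp; exists p, 0; split => //; case: p {Mp} => p1 p2.
by congr pair; [rewrite /= scale0r addr0|apply/funext => x /=; rewrite mul0r addr0].
Qed.

Lemma perp_mem_of_dom (M : set (X * (X -> R))) q : max_self_cancelling M ->
  perp M q -> dom_op M q.1 -> M q.
Proof.
move=> Mmax; have [[MXs [[_ Mcomb] _]] _] := Mmax.
case: q => q1 q2 [dq q_perp] [w Mw] /=; rewrite /= in dq q_perp.
have dw : is_dual w := MXs _ Mw.
(* [(q1, q2) = (q1, w) + (0, q2 - w)], and the second summand cancels itself *)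
have Mr : M (0, fun x => q2 x - w x).
  apply: max_self_cancelling_perp_mem => //; last by rewrite /pair_ /= (dual0 dq) (dual0 dw) subr0.
  split; first exact: dual_sub.
  move=> p Mp; have := q_perp _ Mp; have [_ /(_ _ Mp)] := self_cancelling_sub_perp Mmax.1 Mw.
  by rewrite /pair_ /= (dual0 (MXs _ Mp)); lra.
have := Mcomb 1 1 _ _ Mw Mr; rewrite /= scaler0 addr0 scale1r.
by congr M; congr pair; apply/funext => x; ring.
Qed.

Lemma perp_mem_of_ran (M : set (X * (X -> R))) q : max_self_cancelling M ->
  perp M q -> ran_op M q.2 -> M q.
Proof.
move=> Mmax; have [[MXs [[_ Mcomb] _]] _] := Mmax.
case: q => q1 q2 [dq q_perp] [w Mw] /=; rewrite /= in dq q_perp.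
have Mr : M (q1 - w, fun _ => 0).
  apply: max_self_cancelling_perp_mem => //.
  split; first exact: dual_cst0.
  move=> p Mp; have := q_perp _ Mp; have [_ /(_ _ Mp)] := self_cancelling_sub_perp Mmax.1 Mw.
  have -> : q1 - w = 1 *: q1 + (-1) *: w by rewrite scale1r scaleN1r.
  by rewrite /pair_ /= (dual_lin (MXs _ Mp)); lra.
have := Mcomb 1 1 _ _ Mw Mr; rewrite /= !scale1r addrC subrK.
by congr M; congr pair; apply/funext => x; ring.
Qed.

Lemma perp_dom_of_closed (M : set (X * (X -> R))) q : max_self_cancelling M ->
  closed (dom_op M) -> perp M q -> dom_op M q.1.
Proof.
move=> Mmax Dcl [dq q_perp]; have [[MXs [[M0 Mcomb] _]] _] := Mmax.
apply: contrapT => Dq; have [e e_gt0 gap] := closed_norm_gap Dcl Dq.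
have Dcomb a b u v : dom_op M u -> dom_op M v -> dom_op M (a *: u + b *: v).
  by move=> [f Mu] [h Mv]; exists (fun x => a * f x + b * h x); exact: Mcomb a b _ _ Mu Mv.
have [g [g1 [g0 [glin g_bound]]]] :=
  @gap_separation R X setT (fun u => `|u|) I (fun _ _ _ _ _ _ => I) (fun u _ => normr_ge0 u)
    (fun u v _ _ => ler_normD u v) (fun t u _ => normrZ t u)
    (dom_op M) q.1 e (ex_intro _ _ M0) Dcomb (fun _ _ => I) I e_gt0 gap.
have dg : is_dual g by split; [move=> a b u v; exact: glin|exists e^-1 => x; exact: g_bound].
have M0g : M (0, g).
  apply: max_self_cancelling_perp_mem => //; last by rewrite /pair_ /= dual0.
  split => // p Mp; rewrite /pair_ /= g0; last by exists p.2; case: p Mp.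
  by rewrite (dual0 (MXs _ Mp)) addr0.
by have := q_perp _ M0g; rewrite /pair_ /= g1 (dual0 dq); lra.
Qed.

Lemma perp_ran_of_reflexive (M : set (X * (X -> R))) q : max_self_cancelling M ->
  dual_closed (ran_op M) -> reflexive_space X -> perp M q -> ran_op M q.2.
Proof.
move=> Mmax Rcl Xrefl [dq q_perp]; have [[MXs [[M0 Mcomb] _]] _] := Mmax.
apply: contrapT => Rq.
have R_dual : ran_op M `<=` is_dual (X:=X) by move=> f [x /MXs].
have [e e_gt0 gap] := dual_closed_gap R_dual Rcl dq Rq.
have Rcomb a b f h : ran_op M f -> ran_op M h -> ran_op M (a *: f + b *: h).
  by move=> [u Mu] [v Mv]; exists (a *: u + b *: v); exact: Mcomb a b _ _ Mu Mv.
have [g [g1 [g0 [glin g_bound]]]] :=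
  @gap_separation R (X -> R) (is_dual (X:=X)) dual_norm dual_cst0
    (fun a b _ _ => dual_comb a b) dual_norm_ge0 dual_normD dual_normZ
    (ran_op M) q.2 e (ex_intro _ _ M0) Rcomb R_dual dq e_gt0 gap.
have g_bidual : is_bidual g.
  split; first by move=> a b f h df dh; exact: glin.
  exists e^-1 => f df f1; apply: le_trans (g_bound _ df) _.
  by rewrite -[leRHS]mulr1 ler_wpM2l ?invr_ge0 ?(ltW e_gt0) // dual_norm_le.
have [x0 gx0] := Xrefl g g_bidual.
have Mx0 : M (x0, fun _ => 0).
  apply: max_self_cancelling_perp_mem => //; split; first exact: dual_cst0.
  move=> p Mp; rewrite /pair_ /= -gx0 ?g0 ?add0r //; first by exists p.1; case: p Mp.
  exact: MXs.
by have := q_perp _ Mx0; rewrite /pair_ /= -gx0 // g1; lra.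
Qed.

End Duality.

Theorem lemma7 (R : realType) (X : completeNormedModType R)
  (M : set (X * (X -> R))) (HM : in_XXs M) (Hsub : is_subspace M) :
  (skew_op M -> max_self_cancelling M) /\
  (max_self_cancelling M -> closed (dom_op M) -> skew_op M) /\
  (max_self_cancelling M -> dual_closed (ran_op M) -> reflexive_space X -> skew_op M).
Proof.
split; first exact: skew_max_self_cancelling.
split.
- move=> Mmax Dcl; apply: perp_sub_skew => // q q_perp.
  by apply: perp_mem_of_dom => //; exact: perp_dom_of_closed.
- move=> Mmax Rcl Xrefl; apply: perp_sub_skew => // q q_perp.
  by apply: perp_mem_of_ran => //; exact: perp_ran_of_reflexive.
Qed.
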